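(* Let $C\subseteq\mathbb R$ be a compact interval and $g_1,\dots,g_N:C\to\mathbb R$ continuous functions. Suppose there exist $o_i^*\in\operatorname*{argmax}_{o\in C}g_i(o)$, $i=1,\dots,N$, with $o_1^*\ge o_2^*\ge\cdots\ge o_N^*$, such that each $g_i$ is non-decreasing on $C\cap(-\infty,o_i^*]$ and non-increasing on $C\cap[o_i^*,\infty)$. Then $$\sup_{\substack{\bm v\in C^N\\ v_1\le\cdots\le v_N}}\ \sum_{i=1}^N g_i(v_i)=\sup_{v\in C}\ \sum_{i=1}^N g_i(v).$$ *)

From Stdlib Require Import Reals Lra.
Open Scope R_scope.

Definition cont_on_interval (a b : R) (f : R -> R) : Prop :=
  forall x, a <= x <= b ->
    forall eps, 0 < eps -> exists delta, 0 < delta /\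
      forall y, a <= y <= b -> Rabs (y - x) < delta -> Rabs (f y - f x) < eps.

Fixpoint sumN (N : nat) (h : nat -> R) : R :=
  match N with
  | O => 0
  | S n => sumN n h + h n
  end.

Definition ordered_values (a b : R) (N : nat) (g : nat -> R -> R) (y : R) : Prop :=
  exists v : nat -> R,
    (forall i, (i < N)%nat -> a <= v i <= b) /\
    (forall i, (S i < N)%nat -> v i <= v (S i)) /\
    y = sumN N (fun i => g i (v i)).

Definition diagonal_values (a b : R) (N : nat) (g : nat -> R -> R) (y : R) : Prop :=
  exists v, a <= v <= b /\ y = sumN N (fun i => g i v).

(* An ordered vector v is dominated by a constant one: since v and the peaks o
   are sorted in opposite directions, the intervals between v_i and o_i pairwise
   intersect, hence share a point w, and unimodality gives g_i(v_i) <= g_i(w).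
   Constant vectors being ordered, both sets of values have the same supremum. *)
From Stdlib Require Import Reals Lra Lia.
Open Scope R_scope.

Lemma sumN_le (N : nat) (f h : nat -> R) :
  (forall i, (i < N)%nat -> f i <= h i) -> sumN N f <= sumN N h.
Proof.
  induction N as [|n IH]; intros Hfh; simpl; [lra|].
  assert (Hn := Hfh n ltac:(lia)).
  assert (Hlt := IH (fun i Hi => Hfh i ltac:(lia))).
  lra.
Qed.

Lemma nondecreasing_upto (N : nat) (v : nat -> R) :
  (forall i, (S i < N)%nat -> v i <= v (S i)) ->
  forall i j, (i <= j)%nat -> (j < N)%nat -> v i <= v j.
Proof.
  intros Hv i j Hij; induction Hij as [|j Hij IH]; intros Hj; [lra|].
  assert (Hstep := Hv j Hj); assert (Hprev := IH ltac:(lia)); lra.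
Qed.

Lemma nonincreasing_upto (N : nat) (v : nat -> R) :
  (forall i, (S i < N)%nat -> v (S i) <= v i) ->
  forall i j, (i <= j)%nat -> (j < N)%nat -> v j <= v i.
Proof.
  intros Hv i j Hij Hj.
  assert (Hopp := nondecreasing_upto N (fun k => - v k)
                    (fun k Hk => Ropp_le_contravar _ _ (Hv k Hk)) i j Hij Hj).
  simpl in Hopp; lra.
Qed.

Lemma intervals_common_point (a b : R) (N : nat) (m M : nat -> R) :
  a <= b ->
  (forall i, (i < N)%nat -> a <= m i <= b) ->
  (forall i j, (i < N)%nat -> (j < N)%nat -> m i <= M j) ->
  exists w, a <= w <= b /\ (forall i, (i < N)%nat -> m i <= w <= M i).
Proof.
  intros hab Hm Hmm.
  assert (Hprefix : forall n, (n <= N)%nat -> exists w, a <= w <= b /\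
            (forall i, (i < n)%nat -> m i <= w) /\
            (forall j, (j < N)%nat -> w <= M j)).
  { induction n as [|n IH]; intros Hn.
    - exists a; split; [lra|split; [intros; lia|]].
      intros j Hj; assert (Hmj := Hm j Hj); assert (Hjj := Hmm j j Hj Hj); lra.
    - destruct (IH ltac:(lia)) as [w [Hw [Hlow Hup]]].
      assert (Hmn := Hm n ltac:(lia)).
      exists (Rmax w (m n)); split; [|split].
      + unfold Rmax; destruct (Rle_dec w (m n)); lra.
      + intros i Hi; destruct (Nat.eq_dec i n) as [->|Hne]; [apply Rmax_r|].
        eapply Rle_trans; [apply Hlow; lia|apply Rmax_l].
      + intros j Hj; apply Rmax_lub; [apply Hup, Hj|apply Hmm; lia]. }
  destruct (Hprefix N (le_n N)) as [w [Hw [Hlow Hup]]].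
  exists w; split; [exact Hw|].
  intros i Hi; split; [apply Hlow, Hi|apply Hup, Hi].
Qed.

Lemma unimodal_le_between (a b p v w : R) (f : R -> R) :
  (forall x y, a <= x -> x <= y -> y <= p -> f x <= f y) ->
  (forall x y, p <= x -> x <= y -> y <= b -> f y <= f x) ->
  a <= v <= b -> Rmin v p <= w <= Rmax v p -> f v <= f w.
Proof.
  intros Hinc Hdec Hv; unfold Rmin, Rmax; destruct (Rle_dec v p); intros Hw.
  - apply Hinc; lra.
  - apply Hdec; lra.
Qed.

Lemma is_lub_dominated (A B : R -> Prop) (s : R) :
  (forall y, B y -> A y) ->
  (forall y, A y -> exists z, B z /\ y <= z) ->
  is_lub B s -> is_lub A s.
Proof.
  intros HBA Hdom [Hub Hleast]; split.
  - intros y Hy; destruct (Hdom y Hy) as [z [Hz Hyz]].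
    eapply Rle_trans; [exact Hyz|apply Hub, Hz].
  - intros c Hc; apply Hleast; intros y Hy; apply Hc, HBA, Hy.
Qed.

Lemma diagonal_values_ordered (a b : R) (N : nat) (g : nat -> R -> R) (y : R) :
  diagonal_values a b N g y -> ordered_values a b N g y.
Proof.
  intros [v [Hv ->]]; exists (fun _ => v).
  split; [auto|split; [intros; lra|reflexivity]].
Qed.

Lemma diagonal_values_bound (a b : R) (N : nat) (g : nat -> R -> R) (o : nat -> R) :
  (forall i, (i < N)%nat -> forall x, a <= x <= b -> g i x <= g i (o i)) ->
  bound (diagonal_values a b N g).
Proof.
  intros Hmax; exists (sumN N (fun i => g i (o i))).
  intros y [v [Hv ->]]; apply sumN_le; intros i Hi; apply Hmax; assumption.
Qed.

Lemma ordered_value_le_diagonal (a b : R) (N : nat) (g : nat -> R -> R) (o : nat -> R) :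
  a <= b ->
  (forall i, (i < N)%nat -> a <= o i <= b) ->
  (forall i, (S i < N)%nat -> o (S i) <= o i) ->
  (forall i, (i < N)%nat ->
      forall x y, a <= x -> x <= y -> y <= o i -> g i x <= g i y) ->
  (forall i, (i < N)%nat ->
      forall x y, o i <= x -> x <= y -> y <= b -> g i y <= g i x) ->
  forall y, ordered_values a b N g y ->
    exists z, diagonal_values a b N g z /\ y <= z.
Proof.
  intros hab Ho Ho_sorted Hinc Hdec y [v [Hv [Hv_sorted ->]]].
  destruct (intervals_common_point a b N
              (fun i => Rmin (v i) (o i)) (fun i => Rmax (v i) (o i)) hab)
    as [w [Hw Hwi]].
  - intros i Hi; assert (Hvi := Hv i Hi); assert (Hoi := Ho i Hi).
    unfold Rmin; destruct (Rle_dec (v i) (o i)); lra.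
  - intros i j Hi Hj.
    assert (Hmin := Rmin_l (v i) (o i)); assert (Hmin' := Rmin_r (v i) (o i)).
    assert (Hmax := Rmax_l (v j) (o j)); assert (Hmax' := Rmax_r (v j) (o j)).
    destruct (Nat.le_gt_cases i j).
    + assert (Hvij := nondecreasing_upto N v Hv_sorted i j ltac:(lia) Hj); lra.
    + assert (Hoij := nonincreasing_upto N o Ho_sorted j i ltac:(lia) Hi); lra.
  - exists (sumN N (fun i => g i w)); split; [exists w; split; auto|].
    apply sumN_le; intros i Hi.
    exact (unimodal_le_between a b (o i) (v i) w (g i)
             (Hinc i Hi) (Hdec i Hi) (Hv i Hi) (Hwi i Hi)).
Qed.

Theorem lemma5 (a b : R) (N : nat) (g : nat -> R -> R) (o : nat -> R) :
  a <= b ->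
  (forall i, (i < N)%nat -> cont_on_interval a b (g i)) ->
  (forall i, (i < N)%nat -> a <= o i <= b /\
      (forall x, a <= x <= b -> g i x <= g i (o i))) ->
  (forall i, (S i < N)%nat -> o (S i) <= o i) ->
  (forall i, (i < N)%nat ->
      forall x y, a <= x -> x <= y -> y <= o i -> g i x <= g i y) ->
  (forall i, (i < N)%nat ->
      forall x y, o i <= x -> x <= y -> y <= b -> g i y <= g i x) ->
  exists s, is_lub (ordered_values a b N g) s /\ is_lub (diagonal_values a b N g) s.
Proof.
  intros hab _ Hpeak Ho_sorted Hinc Hdec.
  assert (Hbound : bound (diagonal_values a b N g)).
  { apply (diagonal_values_bound a b N g o); intros i Hi; apply Hpeak, Hi. }
  assert (Hnonempty : exists y, diagonal_values a b N g y).
  { exists (sumN N (fun i => g i a)), a; split; [lra|reflexivity]. }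
  destruct (completeness _ Hbound Hnonempty) as [s Hs].
  exists s; split; [|exact Hs].
  apply (is_lub_dominated _ _ s (diagonal_values_ordered a b N g)); [|exact Hs].
  apply (ordered_value_le_diagonal a b N g o hab); [|assumption..].
  intros i Hi; apply Hpeak, Hi.
Qed.
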